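(* For any $a,b,c$, the 1-2 model on the periodic honeycomb lattice, with signature $(0,c,b,a,a,b,c,0)$ at every vertex, is orthogonally realizable; specifically, taking on every edge the base change matrix $T=\begin{pmatrix}\cos\frac{3\pi}4&\sin\frac{3\pi}4\\-\sin\frac{3\pi}4&\cos\frac{3\pi}4\end{pmatrix}$ yields matchgate signatures satisfying the parity constraint.
   Context: Signatures are indexed by local configurations $000,001,\dots,111$ of the incident $(a,b,c)$-edges. A realization assigns to each edge an invertible $2\times2$ matrix $T_e$ and to each vertex a matchgate signature $m_v$ with $m_v=(T_a\otimes T_b\otimes T_c)r_v$ at black and $m_v=((T_a\otimes T_b\otimes T_c)^t)^{-1}r_v$ at white vertices, each $m_v$ satisfying the parity constraint (vanishing on all binary strings with an even number of $1$'s, or on all with an odd number); the model is orthogonally realizable if a realization exists with all $T_e$ orthogonal. *)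

From Stdlib Require Import Reals ZArith.
Open Scope R_scope.

(* 2x2 real matrices, indexed by bool (false = 0, true = 1). *)
Definition mat2 := bool -> bool -> R.

Definition sumb (f : bool -> R) : R := f false + f true.

Definition mmul2 (A B : mat2) : mat2 := fun i j => sumb (fun k => A i k * B k j).
Definition tr2 (A : mat2) : mat2 := fun i j => A j i.
Definition id2 : mat2 := fun i j => if Bool.eqb i j then 1 else 0.
Definition det2 (A : mat2) : R := A false false * A true true - A false true * A true false.
Definition invertible2 (A : mat2) : Prop := det2 A <> 0.
(* explicit inverse of a 2x2 matrix (meaningful when det2 A <> 0) *)
Definition inv2 (A : mat2) : mat2 := fun i j =>
  match i, j with
  | false, false => A true true / det2 A
  | false, true  => - A false true / det2 A
  | true, false  => - A true false / det2 A
  | true, true   => A false false / det2 A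
  end.
Definition orthogonal2 (A : mat2) : Prop := mmul2 (tr2 A) A = id2.

(* Signatures indexed by local configurations (x_a, x_b, x_c) in {0,1}^3;
   the configuration x_a x_b x_c corresponds to the binary index 4x_a+2x_b+x_c. *)
Definition sig3 := bool -> bool -> bool -> R.

Definition kron3_apply (Ta Tb Tc : mat2) (r : sig3) : sig3 := fun x y z =>
  sumb (fun x' => sumb (fun y' => sumb (fun z' =>
    Ta x x' * Tb y y' * Tc z z' * r x' y' z'))).

(* ((Ta ⊗ Tb ⊗ Tc)^t)^{-1} r, using ((A⊗B⊗C)^t)^{-1} = (A^t)^{-1}⊗(B^t)^{-1}⊗(C^t)^{-1} *)
Definition kron3_invtr_apply (Ta Tb Tc : mat2) (r : sig3) : sig3 :=
  kron3_apply (inv2 (tr2 Ta)) (inv2 (tr2 Tb)) (inv2 (tr2 Tc)) r.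

Definition nb (b : bool) : nat := if b then 1%nat else 0%nat.
Definition odd_weight (x y z : bool) : bool := Nat.odd (nb x + nb y + nb z).

Definition parity_constraint (m : sig3) : Prop :=
  (forall x y z, odd_weight x y z = false -> m x y z = 0) \/
  (forall x y z, odd_weight x y z = true -> m x y z = 0).

Definition sig_onetwo (a b c : R) : sig3 := fun x y z =>
  match x, y, z with
  | false, false, false => 0
  | false, false, true  => c
  | false, true,  false => b
  | false, true,  true  => a
  | true,  false, false => a
  | true,  false, true  => b
  | true,  true,  false => c
  | true,  true,  true  => 0
  end.

Inductive dir := Da | Db | Dc.
(* vertices: (i,j,black?) ; edges: (i,j,d) = edge of direction d at black vertex (i,j) *)
Definition hvertex : Type := (Z * Z * bool)%type.
Definition hedge : Type := (Z * Z * dir)%type.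

(* black (i,j) is joined to white (i,j) by an a-edge, to white (i+1,j) by a
   b-edge and to white (i,j+1) by a c-edge. *)
Definition incident (v : hvertex) (d : dir) : hedge :=
  match v with
  | (i, j, true) => (i, j, d)
  | (i, j, false) =>
      match d with
      | Da => (i, j, Da)
      | Db => ((i - 1)%Z, j, Db)
      | Dc => (i, (j - 1)%Z, Dc)
      end
  end.

Definition vertex_sig (T : hedge -> mat2) (r : hvertex -> sig3) (v : hvertex) : sig3 :=
  let Ta := T (incident v Da) in
  let Tb := T (incident v Db) in
  let Tc := T (incident v Dc) in
  match v with
  | (_, _, true) => kron3_apply Ta Tb Tc (r v)
  | (_, _, false) => kron3_invtr_apply Ta Tb Tc (r v)
  end.

Definition is_realization (T : hedge -> mat2) (r : hvertex -> sig3) : Prop :=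
  (forall e, invertible2 (T e)) /\ (forall v, parity_constraint (vertex_sig T r v)).

Definition orthogonally_realizable (r : hvertex -> sig3) : Prop :=
  exists T : hedge -> mat2, is_realization T r /\ forall e, orthogonal2 (T e).

Definition T34 : mat2 := fun i j =>
  match i, j with
  | false, false => cos (3 * PI / 4)
  | false, true  => sin (3 * PI / 4)
  | true, false  => - sin (3 * PI / 4)
  | true, true   => cos (3 * PI / 4)
  end.

(* The base change matrix is the rotation by 3π/4. A rotation is orthogonal with
   determinant 1, so (T^t)^{-1} = T and black and white vertices receive the same
   signature (T ⊗ T ⊗ T) r. Since cos (3π/4) = - sin (3π/4), T is a multiple of
   [[-1, 1], [-1, -1]], and for the complement-symmetric signature (0,c,b,a,a,b,c,0)
   every even-weight entry of (T ⊗ T ⊗ T) r cancels identically. *)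
From Stdlib Require Import Reals Lra FunctionalExtensionality.
Open Scope R_scope.

Definition rot2 (t : R) : mat2 := fun i j =>
  match i, j with
  | false, false => cos t
  | false, true  => sin t
  | true, false  => - sin t
  | true, true   => cos t
  end.

Lemma det2_rot2 (t : R) : det2 (rot2 t) = 1.
Proof. unfold det2, rot2; rewrite <- (sin2_cos2 t); unfold Rsqr; ring. Qed.

Lemma orthogonal2_rot2 (t : R) : orthogonal2 (rot2 t).
Proof.
  pose proof (sin2_cos2 t) as Hsc; unfold Rsqr in Hsc.
  unfold orthogonal2.
  apply functional_extensionality; intro i; apply functional_extensionality; intro j.
  destruct i, j; unfold mmul2, tr2, sumb, id2, rot2; simpl; lra.
Qed.

Lemma inv2_tr2_rot2 (t : R) : inv2 (tr2 (rot2 t)) = rot2 t.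
Proof.
  assert (Hdet : det2 (tr2 (rot2 t)) = 1) by (rewrite <- (det2_rot2 t); unfold det2, tr2; ring).
  apply functional_extensionality; intro i; apply functional_extensionality; intro j.
  unfold inv2; rewrite Hdet.
  destruct i, j; unfold tr2, rot2; field.
Qed.

Lemma vertex_sig_const_rot2 (t : R) (r : hvertex -> sig3) (v : hvertex) :
  vertex_sig (fun _ => rot2 t) r v = kron3_apply (rot2 t) (rot2 t) (rot2 t) (r v).
Proof.
  destruct v as [[i j] [|]]; simpl; [reflexivity |].
  unfold kron3_invtr_apply; rewrite inv2_tr2_rot2; reflexivity.
Qed.

Lemma parity_kron3_rot2_onetwo (t a b c : R) :
  cos t + sin t = 0 ->
  parity_constraint (kron3_apply (rot2 t) (rot2 t) (rot2 t) (sig_onetwo a b c)).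
Proof.
  intro Hcs; assert (Hcos : cos t = - sin t) by lra.
  left; intros x y z Heven.
  destruct x, y, z; simpl in Heven; try discriminate;
    unfold kron3_apply, sumb, rot2, sig_onetwo; rewrite Hcos; ring.
Qed.

Lemma cos_add_sin_3PI4 : cos (3 * PI / 4) + sin (3 * PI / 4) = 0.
Proof.
  replace (3 * PI / 4) with (PI - PI / 4) by field.
  rewrite sin_PI_x, cos_minus, cos_PI, sin_PI, cos_PI4, sin_PI4; ring.
Qed.

Lemma is_realization_rot2_onetwo (t a b c : R) :
  cos t + sin t = 0 ->
  is_realization (fun _ => rot2 t) (fun _ => sig_onetwo a b c).
Proof.
  intro Hcs; split.
  - intro e; unfold invertible2; rewrite det2_rot2; lra.
  - intro v; rewrite vertex_sig_const_rot2; exact (parity_kron3_rot2_onetwo t a b c Hcs).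
Qed.

Theorem mainTheorem18 (a b c : R) :
  orthogonally_realizable (fun _ => sig_onetwo a b c) /\
  is_realization (fun _ => T34) (fun _ => sig_onetwo a b c) /\
  orthogonal2 T34.
Proof.
  change T34 with (rot2 (3 * PI / 4)).
  pose proof (is_realization_rot2_onetwo (3 * PI / 4) a b c cos_add_sin_3PI4) as Hreal.
  split; [| split; [exact Hreal | apply orthogonal2_rot2]].
  exists (fun _ => rot2 (3 * PI / 4)); split; [exact Hreal | intro; apply orthogonal2_rot2].
Qed.
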